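(* Let $(X,d)$ be a compact metric space and $f_{1,\infty}=\{f_n\}_{n=1}^\infty$ a sequence of continuous self-maps of $X$. If the induced non-autonomous system $(\mathcal{M}(X),\widetilde{f}_{1,\infty})$ is topologically transitive, then $(X,f_{1,\infty})$ satisfies Banks's condition.
   Context: For a sequence $f_{1,\infty}=\{f_n\}_{n\ge1}$ of continuous self-maps of $X$, write $f_1^n=f_n\circ\cdots\circ f_1$ and $f_1^{-n}=(f_1^n)^{-1}$ (preimage). $\mathcal{M}(X)$ is the space of Borel probability measures on $X$ with the weak$^*$ topology (equivalently the Prohorov metric), and the induced system $(\mathcal{M}(X),\widetilde{f}_{1,\infty})$ is given by $\widetilde{f}_1^n(\mu)(A)=\mu(f_1^{-n}(A))$ for Borel $A$ (push-forward). A non-autonomous system $(Y,g_{1,\infty})$ is topologically transitive if for every pair of non-empty open sets $U,V$ there is $n\in\mathbb{N}$ with $g_1^n(U)\cap V\ne\emptyset$. $(X,f_{1,\infty})$ satisfies Banks's condition if for any three non-empty open sets $U,V,W\subseteq X$ there is $n\in\mathbb{N}$ with $f_1^n(U)\cap V\neq\emptyset$ and $f_1^n(U)\cap W\ne\emptyset$. *)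

From Stdlib Require Import Reals List.
Open Scope R_scope.

Section Defs.
Variable X : Type.
Variable d : X -> X -> R.

Definition is_metric : Prop :=
  (forall x y, 0 <= d x y) /\ (forall x y, d x y = 0 <-> x = y) /\
  (forall x y, d x y = d y x) /\ (forall x y z, d x z <= d x y + d y z).

Definition open_set (U : X -> Prop) : Prop :=
  forall x, U x -> exists eps, 0 < eps /\ forall y, d x y < eps -> U y.

Definition compact_space : Prop :=
  forall (I : Type) (U : I -> X -> Prop),
    (forall i, open_set (U i)) -> (forall x, exists i, U i x) ->
    exists l : list I, forall x, exists i, In i l /\ U i x.

Definition continuous_map (f : X -> X) : Prop :=
  forall x eps, 0 < eps -> exists delta, 0 < delta /\
    forall y, d x y < delta -> d (f x) (f y) < eps.

Definition is_sigma_algebra (S : (X -> Prop) -> Prop) : Prop :=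
  S (fun _ => True) /\
  (forall A, S A -> S (fun x => ~ A x)) /\
  (forall A : nat -> X -> Prop, (forall n, S (A n)) -> S (fun x => exists n, A n x)).

Definition borel (A : X -> Prop) : Prop :=
  forall S, is_sigma_algebra S -> (forall U, open_set U -> S U) -> S A.

(* a Borel probability measure, as a set function read on Borel sets *)
Definition is_prob_measure (m : (X -> Prop) -> R) : Prop :=
  (forall A, borel A -> 0 <= m A) /\
  m (fun _ => True) = 1 /\
  (forall A : nat -> X -> Prop,
     (forall n, borel (A n)) ->
     (forall i j x, i <> j -> A i x -> A j x -> False) ->
     infinite_sum (fun n => m (A n)) (m (fun x => exists n, A n x))).

Definition nbhd (A : X -> Prop) (eps : R) : X -> Prop :=
  fun x => exists a, A a /\ d x a < eps.

(* eps is admissible in the infimum defining the Prohorov metric *)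
Definition prohorov_adm (m1 m2 : (X -> Prop) -> R) (eps : R) : Prop :=
  0 < eps /\ forall A, borel A ->
    m1 A <= m2 (nbhd A eps) + eps /\ m2 A <= m1 (nbhd A eps) + eps.

(* Prohorov distance (an infimum) is < r iff some admissible eps is < r *)
Definition prohorov_lt (m1 m2 : (X -> Prop) -> R) (r : R) : Prop :=
  exists eps, prohorov_adm m1 m2 eps /\ eps < r.

Definition open_M (U : ((X -> Prop) -> R) -> Prop) : Prop :=
  forall m, is_prob_measure m -> U m ->
    exists r, 0 < r /\ forall m', is_prob_measure m' -> prohorov_lt m m' r -> U m'.

Definition nonempty_M (U : ((X -> Prop) -> R) -> Prop) : Prop :=
  exists m, is_prob_measure m /\ U m.

Definition push (g : X -> X) (m : (X -> Prop) -> R) : (X -> Prop) -> R :=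
  fun A => m (fun x => A (g x)).

(* f_1^n = f_n o ... o f_1 (f 0 is unused; f_1^0 = id) *)
Fixpoint comp_seq (f : nat -> X -> X) (n : nat) (x : X) : X :=
  match n with
  | O => x
  | S k => f (S k) (comp_seq f k x)
  end.

Definition induced_transitive (f : nat -> X -> X) : Prop :=
  forall U V, open_M U -> open_M V -> nonempty_M U -> nonempty_M V ->
    exists n, (1 <= n)%nat /\
      exists m, is_prob_measure m /\ U m /\ V (push (comp_seq f n) m).

Definition banks_condition (f : nat -> X -> X) : Prop :=
  forall U V W, open_set U -> open_set V -> open_set W ->
    (exists x, U x) -> (exists x, V x) -> (exists x, W x) ->
    exists n, (1 <= n)%nat /\
      (exists x, U x /\ V (comp_seq f n x)) /\
      (exists x, U x /\ W (comp_seq f n x)).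

End Defs.

From Pilot Require Import Defs.
From Stdlib Require Import Reals List Lra Lia Classical ClassicalEpsilon
  FunctionalExtensionality PropExtensionality.
Open Scope R_scope.

(* Given open sets U, V, W around u, v, w, take r below their radii and below 1/4.
   Transitivity of the induced system, applied to the Prohorov r-balls about the
   Dirac measure at u and about the average of the Dirac measures at v and w, gives
   a probability measure m and n >= 1 such that m charges the r-ball about u with
   mass > 3/4 while its push-forward under f_1^n charges the r-balls about v and
   about w with mass > 1/4 each.  So the r-ball about u meets the preimage of each
   of them. *)

Lemma pred_ext {T : Type} (A B : T -> Prop) : (forall x, A x <-> B x) -> A = B.
Proof.
  intros HAB; apply functional_extensionality; intros x.
  apply propositional_extensionality; apply HAB.
Qed.

Section Borel.
Variable X : Type.
Variable d : X -> X -> R.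

Lemma borel_open U : Defs.open_set X d U -> borel X d U.
Proof. intros HU S _ HS; apply HS, HU. Qed.

Lemma borel_setT : borel X d (fun _ => True).
Proof. intros S HS _; apply HS. Qed.

Lemma borel_compl A : borel X d A -> borel X d (fun x => ~ A x).
Proof. intros HA S HS HO; apply HS, HA; assumption. Qed.

Lemma borel_countable_union (A : nat -> X -> Prop) :
  (forall n, borel X d (A n)) -> borel X d (fun x => exists n, A n x).
Proof. intros HA S HS HO; apply HS; intros n; apply HA; assumption. Qed.

Lemma borel_set0 : borel X d (fun _ => False).
Proof.
  replace (fun _ : X => False) with (fun x : X => ~ True)
    by (apply pred_ext; tauto).
  apply borel_compl, borel_setT.
Qed.

Lemma borel_setU A B : borel X d A -> borel X d B -> borel X d (fun x => A x \/ B x).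
Proof.
  intros HA HB.
  replace (fun x => A x \/ B x)
    with (fun x => exists n, (match n with O => A | S _ => B end) x).
  - apply borel_countable_union; intros [|n]; assumption.
  - apply pred_ext; intros x; split.
    + intros [[|n] H]; auto.
    + intros [H|H]; [exists O | exists 1%nat]; assumption.
Qed.

Lemma borel_setI A B : borel X d A -> borel X d B -> borel X d (fun x => A x /\ B x).
Proof.
  intros HA HB.
  replace (fun x => A x /\ B x) with (fun x => ~ (~ A x \/ ~ B x))
    by (apply pred_ext; intros x; tauto).
  apply borel_compl, borel_setU; apply borel_compl; assumption.
Qed.

Lemma continuous_open_preimage (g : X -> X) O :
  continuous_map X d g -> Defs.open_set X d O -> Defs.open_set X d (fun x => O (g x)).
Proof.
  intros Hg HO x Hx.
  destruct (HO _ Hx) as [e [He HeO]].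
  destruct (Hg x e He) as [delta [Hdelta Hclose]].
  exists delta; split; [exact Hdelta|].
  intros y Hy; apply HeO, Hclose, Hy.
Qed.

Lemma borel_preimage (g : X -> X) A :
  continuous_map X d g -> borel X d A -> borel X d (fun x => A (g x)).
Proof.
  intros Hg HA S HS HO.
  apply (HA (fun B => S (fun x => B (g x))));
    [|intros O HOp; apply HO, continuous_open_preimage; assumption].
  destruct HS as [HT [Hc Hu]]; repeat split.
  - exact HT.
  - intros B HB; apply Hc, HB.
  - intros B HB; apply Hu, HB.
Qed.

Lemma comp_seq_continuous (f : nat -> X -> X) :
  (forall n, (1 <= n)%nat -> continuous_map X d (f n)) ->
  forall n, continuous_map X d (comp_seq X f n).
Proof.
  intros Hf n; induction n as [|n IH]; intros x e He.
  - exists e; split; [exact He | intros y Hy; exact Hy].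
  - destruct (Hf (S n) ltac:(lia) (comp_seq X f n x) e He) as [delta1 [Hdelta1 Hclose1]].
    destruct (IH x delta1 Hdelta1) as [delta2 [Hdelta2 Hclose2]].
    exists delta2; split; [exact Hdelta2|].
    intros y Hy; apply Hclose1, Hclose2, Hy.
Qed.

End Borel.

Lemma infinite_sum_const_eq0 c l : infinite_sum (fun _ => c) l -> c = 0.
Proof.
  intros Hsum.
  destruct (Req_dec c 0) as [|Hc]; [assumption|exfalso].
  assert (Hpos : 0 < Rabs c / 2) by (apply Rabs_pos_lt in Hc; lra).
  destruct (Hsum _ Hpos) as [N HN].
  pose proof (HN N (Nat.le_refl N)) as H1.
  pose proof (HN (S N) (Nat.le_succ_diag_r N)) as H2.
  unfold R_dist in H1, H2; simpl in H2.
  pose proof (Rabs_triang (sum_f_R0 (fun _ => c) N + c - l)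
                          (- (sum_f_R0 (fun _ => c) N - l))) as Htri.
  rewrite Rabs_Ropp in Htri.
  replace (sum_f_R0 (fun _ => c) N + c - l + - (sum_f_R0 (fun _ => c) N - l))
    with c in Htri by ring.
  lra.
Qed.

Lemma infinite_sum_finite (a : nat -> R) N :
  (forall k, (N < k)%nat -> a k = 0) -> infinite_sum a (sum_f_R0 a N).
Proof.
  intros Hzero.
  assert (Hconst : forall p, sum_f_R0 a (p + N) = sum_f_R0 a N).
  { induction p as [|p IH]; [reflexivity|].
    simpl; rewrite IH, Hzero by lia; ring. }
  intros eps Heps; exists N; intros n Hn.
  replace n with ((n - N) + N)%nat by lia.
  rewrite Hconst; unfold R_dist; rewrite Rminus_diag, Rabs_R0; exact Heps.
Qed.

Lemma infinite_sum_average (a b : nat -> R) la lb :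
  infinite_sum a la -> infinite_sum b lb ->
  infinite_sum (fun n => (a n + b n) / 2) ((la + lb) / 2).
Proof.
  intros Ha Hb.
  assert (Hhalf : Un_cv (fun _ => / 2) (/ 2)).
  { intros eps Heps; exists O; intros n _.
    unfold R_dist; rewrite Rminus_diag, Rabs_R0; exact Heps. }
  pose proof (CV_mult _ _ _ _ (CV_plus _ _ _ _ Ha Hb) Hhalf) as Hcv.
  intros eps Heps; destruct (Hcv eps Heps) as [N HN]; exists N; intros n Hn.
  unfold Rdiv; rewrite <- scal_sum, sum_plus, Rmult_comm; apply HN, Hn.
Qed.

Section ProbabilityMeasure.
Variable X : Type.
Variable d : X -> X -> R.
Variable m : (X -> Prop) -> R.
Hypothesis Hm : is_prob_measure X d m.

Lemma prob_measure_set0 : m (fun _ => False) = 0.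
Proof.
  destruct Hm as [_ [_ Hadd]].
  specialize (Hadd (fun _ _ => False) (fun _ => borel_set0 X d) ltac:(tauto)).
  exact (infinite_sum_const_eq0 _ _ Hadd).
Qed.

Lemma prob_measure_setU A B : borel X d A -> borel X d B ->
  (forall x, A x -> B x -> False) -> m (fun x => A x \/ B x) = m A + m B.
Proof.
  intros HA HB Hdisj.
  set (F n := match n with O => A | 1%nat => B | _ => fun _ : X => False end).
  assert (HF : forall n, borel X d (F n))
    by (intros [|[|n]]; simpl; auto using borel_set0).
  assert (HFdisj : forall i j x, i <> j -> F i x -> F j x -> False).
  { intros [|[|i]] [|[|j]] x Hij Hi Hj; simpl in *; try contradiction; eauto. }
  assert (HFunion : (fun x => exists n, F n x) = (fun x => A x \/ B x)).
  { apply pred_ext; intros x; split.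
    - intros [[|[|n]] H]; simpl in H; tauto.
    - intros [H|H]; [exists O | exists 1%nat]; assumption. }
  destruct Hm as [_ [_ Hadd]].
  specialize (Hadd F HF HFdisj); rewrite HFunion in Hadd.
  assert (Htail : forall k, (1 < k)%nat -> m (F k) = 0).
  { intros [|[|k]] Hk; [lia | lia | apply prob_measure_set0]. }
  rewrite (uniqueness_sum _ _ _ Hadd (infinite_sum_finite _ 1 Htail)).
  reflexivity.
Qed.

Lemma prob_measure_mono A B : borel X d A -> borel X d B ->
  (forall x, A x -> B x) -> m A <= m B.
Proof.
  intros HA HB HAB.
  assert (HBA : borel X d (fun x => B x /\ ~ A x))
    by (apply borel_setI; [|apply borel_compl]; assumption).
  replace B with (fun x => A x \/ (B x /\ ~ A x)).
  - rewrite prob_measure_setU by (assumption || (intros ? ? []; tauto)).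
    pose proof (proj1 Hm _ HBA); lra.
  - apply pred_ext; intros x; split; [intros [HAx|[HBx _]]; auto|].
    intros HBx; destruct (classic (A x)); tauto.
Qed.

Lemma prob_measure_le1 A : borel X d A -> m A <= 1.
Proof.
  intros HA; rewrite <- (proj1 (proj2 Hm)).
  apply prob_measure_mono; auto using borel_setT.
Qed.

Lemma prob_measure_meet A B : borel X d A -> borel X d B ->
  1 < m A + m B -> exists x, A x /\ B x.
Proof.
  intros HA HB Hbig.
  apply NNPP; intros Hdisj.
  rewrite <- prob_measure_setU in Hbig by (firstorder).
  pose proof (prob_measure_le1 _ (borel_setU _ _ _ _ HA HB)); lra.
Qed.

End ProbabilityMeasure.

Section Measures.
Variable X : Type.

Definition dirac (u : X) (A : X -> Prop) : R :=
  if excluded_middle_informative (A u) then 1 else 0.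

Definition average (m1 m2 : (X -> Prop) -> R) (A : X -> Prop) : R :=
  (m1 A + m2 A) / 2.

Lemma dirac_nonneg u A : 0 <= dirac u A.
Proof. unfold dirac; destruct excluded_middle_informative; lra. Qed.

Lemma dirac_mem u A : A u -> dirac u A = 1.
Proof. unfold dirac; destruct excluded_middle_informative; tauto. Qed.

Lemma dirac_nmem u A : ~ A u -> dirac u A = 0.
Proof. unfold dirac; destruct excluded_middle_informative; tauto. Qed.

Variable d : X -> X -> R.

Lemma dirac_prob_measure u : is_prob_measure X d (dirac u).
Proof.
  split; [|split].
  - intros A _; apply dirac_nonneg.
  - apply dirac_mem; exact I.
  - intros A _ Hdisj.
    destruct (classic (exists n, A n u)) as [[n0 Hn0]|Hnone].
    + assert (Hother : forall k, k <> n0 -> dirac u (A k) = 0).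
      { intros k Hk; apply dirac_nmem; intros Hku; exact (Hdisj _ _ _ Hk Hku Hn0). }
      replace (dirac u (fun x => exists n, A n x))
        with (sum_f_R0 (fun k => dirac u (A k)) n0).
      { apply infinite_sum_finite; intros k Hk; apply Hother; lia. }
      rewrite dirac_mem by (exists n0; exact Hn0).
      destruct n0 as [|n0]; simpl.
      * apply dirac_mem, Hn0.
      * rewrite sum_eq_R0, dirac_mem by (assumption || (intros k Hk; apply Hother; lia)).
        ring.
    + rewrite dirac_nmem by exact Hnone.
      replace 0 with (sum_f_R0 (fun k => dirac u (A k)) 0)
        by (apply dirac_nmem; intros H; apply Hnone; exists O; exact H).
      apply infinite_sum_finite; intros k _.
      apply dirac_nmem; intros H; apply Hnone; exists k; exact H.
Qed.

Lemma average_prob_measure m1 m2 :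
  is_prob_measure X d m1 -> is_prob_measure X d m2 ->
  is_prob_measure X d (average m1 m2).
Proof.
  intros [Hpos1 [Htot1 Hadd1]] [Hpos2 [Htot2 Hadd2]]; unfold average.
  split; [|split].
  - intros A HA; pose proof (Hpos1 A HA); pose proof (Hpos2 A HA); lra.
  - rewrite Htot1, Htot2; field.
  - intros A HA Hdisj.
    apply infinite_sum_average; [apply Hadd1 | apply Hadd2]; assumption.
Qed.

Lemma push_prob_measure g m : continuous_map X d g ->
  is_prob_measure X d m -> is_prob_measure X d (push X g m).
Proof.
  intros Hg [Hpos [Htot Hadd]]; unfold push.
  split; [|split].
  - intros A HA; apply Hpos, borel_preimage; assumption.
  - exact Htot.
  - intros A HA Hdisj.
    apply (Hadd (fun n x => A n (g x))).
    + intros n; apply borel_preimage; auto.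
    + intros i j x Hij; apply Hdisj, Hij.
Qed.

End Measures.

Section Prohorov.
Variable X : Type.
Variable d : X -> X -> R.
Hypothesis Hd : is_metric X d.

Lemma nbhd_open A e : Defs.open_set X d (nbhd X d A e).
Proof.
  destruct Hd as [_ [_ [Hsym Htri]]].
  intros x [a [Ha Hxa]]; exists (e - d x a); split; [lra|].
  intros y Hy; exists a; split; [exact Ha|].
  pose proof (Htri y x a); rewrite Hsym in Hy; lra.
Qed.

Lemma borel_nbhd A e : borel X d (nbhd X d A e).
Proof. apply borel_open, nbhd_open. Qed.

Lemma nbhd_mono A e e' x : e <= e' -> nbhd X d A e x -> nbhd X d A e' x.
Proof. intros Hee' [a [Ha Hxa]]; exists a; split; [exact Ha | lra]. Qed.

Lemma nbhd_nbhd A e1 e2 x : nbhd X d (nbhd X d A e1) e2 x -> nbhd X d A (e1 + e2) x.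
Proof.
  intros [y [[a [Ha Hya]] Hxy]]; exists a; split; [exact Ha|].
  pose proof (proj2 (proj2 (proj2 Hd)) x y a); lra.
Qed.

Lemma nbhd_singleton u r x : nbhd X d (fun y => y = u) r x <-> d u x < r.
Proof.
  rewrite (proj1 (proj2 (proj2 Hd)) u x).
  split; [intros [a [-> Hxa]]; exact Hxa | intros Hxu; exists u; auto].
Qed.

Lemma borel_singleton u : borel X d (fun x => x = u).
Proof.
  replace (fun x => x = u) with (fun x => ~ x <> u)
    by (apply pred_ext; intros x; split; [apply NNPP | auto]).
  apply borel_compl, borel_open.
  destruct Hd as [Hpos [Hzero [Hsym _]]].
  intros x Hxu; exists (d u x); split.
  - destruct (Hpos u x) as [Hlt|Heq]; [exact Hlt|].
    exfalso; apply Hxu; symmetry; apply Hzero; auto.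
  - intros y Hy ->; rewrite Hsym in Hy; lra.
Qed.

Lemma prohorov_adm_refl m e : is_prob_measure X d m -> 0 < e -> prohorov_adm X d m m e.
Proof.
  intros Hm He; split; [exact He|]; intros A HA.
  assert (m A <= m (nbhd X d A e)).
  { apply (prob_measure_mono X d); auto using borel_nbhd.
    intros x Hx; exists x; split; [exact Hx|].
    rewrite (proj2 (proj1 (proj2 Hd) x x) eq_refl); exact He. }
  lra.
Qed.

Lemma prohorov_adm_trans m1 m2 m3 e1 e2 :
  is_prob_measure X d m1 -> is_prob_measure X d m3 ->
  prohorov_adm X d m1 m2 e1 -> prohorov_adm X d m2 m3 e2 ->
  prohorov_adm X d m1 m3 (e1 + e2).
Proof.
  intros Hm1 Hm3 [He1 H12] [He2 H23]; split; [lra|]; intros A HA.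
  destruct (H12 A HA) as [H12A H21A]; destruct (H23 A HA) as [H23A H32A].
  destruct (H23 _ (borel_nbhd A e1)) as [H23n _].
  destruct (H12 _ (borel_nbhd A e2)) as [_ H21n].
  assert (m3 (nbhd X d (nbhd X d A e1) e2) <= m3 (nbhd X d A (e1 + e2)))
    by (apply (prob_measure_mono X d); auto using borel_nbhd; apply nbhd_nbhd).
  assert (m1 (nbhd X d (nbhd X d A e2) e1) <= m1 (nbhd X d A (e1 + e2))).
  { apply (prob_measure_mono X d); auto using borel_nbhd.
    intros x Hx; rewrite Rplus_comm; apply nbhd_nbhd, Hx. }
  lra.
Qed.

Definition prohorov_ball (m0 : (X -> Prop) -> R) (r : R) : ((X -> Prop) -> R) -> Prop :=
  fun m => prohorov_lt X d m0 m r.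

Lemma prohorov_ball_open m0 r : is_prob_measure X d m0 -> open_M X d (prohorov_ball m0 r).
Proof.
  intros Hm0 m Hm [e [Hadm Her]]; exists (r - e); split; [lra|].
  intros m' Hm' [e' [Hadm' Her']]; exists (e + e'); split; [|lra].
  apply (prohorov_adm_trans _ m); assumption.
Qed.

Lemma prohorov_ball_nonempty m0 r : is_prob_measure X d m0 -> 0 < r ->
  nonempty_M X d (prohorov_ball m0 r).
Proof.
  intros Hm0 Hr; exists m0; split; [exact Hm0|].
  exists (r / 2); split; [apply prohorov_adm_refl; [exact Hm0 | lra] | lra].
Qed.

Lemma prohorov_lt_lower_bound m0 m r A : is_prob_measure X d m ->
  prohorov_lt X d m0 m r -> borel X d A -> m0 A - r < m (nbhd X d A r).
Proof.
  intros Hm [e [[He Hadm] Her]] HA.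
  destruct (Hadm A HA) as [Hlow _].
  assert (m (nbhd X d A e) <= m (nbhd X d A r)).
  { apply (prob_measure_mono X d); auto using borel_nbhd.
    intros x; apply nbhd_mono; lra. }
  lra.
Qed.

End Prohorov.

Lemma average_comm X (m1 m2 : (X -> Prop) -> R) : average X m1 m2 = average X m2 m1.
Proof. apply functional_extensionality; intros A; unfold average; rewrite Rplus_comm; reflexivity. Qed.

Lemma ball_meets_preimage_ball X d (Hd : is_metric X d) m g u z r :
  is_prob_measure X d m -> continuous_map X d g ->
  1 < m (nbhd X d (fun x => x = u) r) + push X g m (nbhd X d (fun x => x = z) r) ->
  exists x, d u x < r /\ d z (g x) < r.
Proof.
  intros Hm Hg Hbig.
  destruct (prob_measure_meet X d m Hm _ _ (borel_nbhd X d Hd _ r)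
              (borel_preimage X d g _ Hg (borel_nbhd X d Hd _ r)) Hbig)
    as [x [Hux Hzx]].
  exists x; split; apply (nbhd_singleton X d Hd); assumption.
Qed.

Lemma prohorov_dirac_average_meet X d (Hd : is_metric X d) m g u v w r :
  is_prob_measure X d m -> continuous_map X d g -> r <= 1/4 ->
  prohorov_lt X d (dirac X u) m r ->
  prohorov_lt X d (average X (dirac X v) (dirac X w)) (push X g m) r ->
  exists x, d u x < r /\ d v (g x) < r.
Proof.
  intros Hm Hg Hr Hmu Hmvw.
  pose proof (prohorov_lt_lower_bound X d Hd _ _ _ _ Hm Hmu (borel_singleton X d Hd u)) as Bu.
  pose proof (prohorov_lt_lower_bound X d Hd _ _ _ _ (push_prob_measure X d g m Hg Hm) Hmvw
                (borel_singleton X d Hd v)) as Bv.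
  unfold average in Bv.
  rewrite (dirac_mem X u) in Bu by reflexivity.
  rewrite (dirac_mem X v) in Bv by reflexivity.
  pose proof (dirac_nonneg X w (fun x => x = v)).
  apply (ball_meets_preimage_ball X d Hd m); [assumption | assumption | lra].
Qed.

Theorem theorem3p4 (X : Type) (d : X -> X -> R) (f : nat -> X -> X)
  (Hmetric : is_metric X d) (Hcompact : compact_space X d)
  (Hcont : forall n, (1 <= n)%nat -> continuous_map X d (f n))
  (Htrans : induced_transitive X d f) :
  banks_condition X d f.
Proof.
  intros U V W HU HV HW [u Hu] [v Hv] [w Hw].
  destruct (HU u Hu) as [ru [Hru HUr]].
  destruct (HV v Hv) as [rv [Hrv HVr]].
  destruct (HW w Hw) as [rw [Hrw HWr]].
  set (r := Rmin (1/4) (Rmin ru (Rmin rv rw))).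
  assert (Hr : 0 < r /\ r <= 1/4 /\ r <= ru /\ r <= rv /\ r <= rw)
    by (unfold r, Rmin; repeat destruct Rle_dec; lra).
  set (mu := dirac X u); set (nu := average X (dirac X v) (dirac X w)).
  assert (Hmu : is_prob_measure X d mu) by apply dirac_prob_measure.
  assert (Hnu : is_prob_measure X d nu)
    by (apply average_prob_measure; apply dirac_prob_measure).
  destruct (Htrans (prohorov_ball X d mu r) (prohorov_ball X d nu r)
              (prohorov_ball_open X d Hmetric _ r Hmu) (prohorov_ball_open X d Hmetric _ r Hnu)
              (prohorov_ball_nonempty X d Hmetric _ r Hmu ltac:(lra))
              (prohorov_ball_nonempty X d Hmetric _ r Hnu ltac:(lra)))
    as [n [Hn [m [Hm [Hm_mu Hm_nu]]]]].
  pose proof (comp_seq_continuous X d f Hcont n) as Hg.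
  exists n; split; [exact Hn|]; split.
  - destruct (prohorov_dirac_average_meet X d Hmetric m _ u v w r Hm Hg ltac:(lra) Hm_mu Hm_nu)
      as [x [Hux Hvx]].
    exists x; split; [apply HUr | apply HVr]; lra.
  - unfold nu in Hm_nu; rewrite average_comm in Hm_nu.
    destruct (prohorov_dirac_average_meet X d Hmetric m _ u w v r Hm Hg ltac:(lra) Hm_mu Hm_nu)
      as [x [Hux Hwx]].
    exists x; split; [apply HUr | apply HWr]; lra.
Qed.
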